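(* Let $n,d\ge 1$, $r\in[0,1]$, $\omega\ge 0$, $\alpha\in(0,1]$, $K_\omega,K_\alpha>0$, and $0<\mu\le L\le nL$. Put $\mu^r_{\omega,\alpha}=\frac{rd}{(1-r)K_\omega+rK_\alpha}$ and $K^r=(1-r)K_\omega+rK_\alpha$. For $p,\tau\in(0,1]$ and $L_{\max}\in[L,nL]$ let $$T(p,\tau;L_{\max})=\max\Big\{\sqrt{\tfrac{L}{\alpha p\mu}},\sqrt{\tfrac{L}{\alpha\tau\mu}},\sqrt{\tfrac{\sqrt{LL_{\max}}(\omega+1)\sqrt{\omega\tau}}{\alpha\sqrt n\,\mu}},\sqrt{\tfrac{\sqrt{LL_{\max}}\sqrt{\omega+1}\sqrt{\omega\tau}}{\alpha\sqrt p\sqrt n\,\mu}},\sqrt{\tfrac{L_{\max}\omega(\omega+1)^2p}{n\mu}},\sqrt{\tfrac{L_{\max}\omega}{np\mu}},\tfrac1\alpha,\tfrac1\tau,\omega+1,\tfrac1p\Big\}$$ and $M(p,\tau;L_{\max})=\big((1-r)K_\omega+r(K_\alpha+pd)\big)\,T(p,\tau;L_{\max})+d$. Choose $$p^\star=\min\Big\{\frac{1}{\omega+1},\frac{1}{\mu^r_{\omega,\alpha}}\Big\}\quad(\text{with }1/0=+\infty),\qquad \tau^\star=\frac{(p^\star)^{1/3}}{(\omega+1)^{2/3}}.$$ Then, up to universal multiplicative constants (and logarithmic factors): (i) $(p^\star,\tau^\star)$ minimizes $\max_{L_{\max}\in[L,nL]}M(p,\tau;L_{\max})$ over $p,\tau\in(0,1]$;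 (ii) for every $L_{\max}\in[L,nL]$, $T(p^\star,\tau^\star;L_{\max})$ is of the order of $$T^{\mathrm{realistic}}=\max\Big\{\sqrt{\tfrac{L\max\{\omega+1,\mu^r_{\omega,\alpha}\}}{\alpha\mu}},\sqrt{\tfrac{L_{\max}\omega\max\{\omega+1,\mu^r_{\omega,\alpha}\}}{n\mu}},\tfrac1\alpha,\omega+1,\mu^r_{\omega,\alpha}\Big\};$$ (iii) the total communication complexity with this choice, $M(p^\star,\tau^\star;L_{\max})$, is of the order of $K^r\,T^{\mathrm{realistic}}+d$.
   Context: This concerns the method 2Direction for minimizing $f=\frac1n\sum_{i=1}^n f_i$ over $\mathbb R^d$ with $n$ workers, where each $f_i$ is $L_i$-smooth and convex, $L_{\max}=\max_i L_i$, $f$ is $L$-smooth and $\mu$-strongly convex (so that necessarily $L\le L_{\max}\le nL$). Workers use unbiased compressors with variance parameter $\omega$ (i.e. $\mathbb E[\mathcal C(x)]=x$, $\mathbb E\|\mathcal C(x)-x\|^2\le\omega\|x\|^2$) whose expected density (i.e. $\sup_x\mathbb E\|\mathcal C(x)\|_0$, the expected number of nonzero coordinates sent) is $K_\omega$; the server uses a biased compressor with contraction parameter $\alpha$ (i.e. $\mathbb E\|\mathcal C(x)-x\|^2\le(1-\alpha)\|x\|^2$) and expected density $K_\alpha$. The method has two hyper-parameters: a probability $p$ and a momentum $\tau$. Up to logarithmic factors, $T(p,\tau;L_{\max})$ is the number of iterations the method needs in the strongly convex case, and $M(p,\tau;L_{\max})$ is its total communication complexity $(1-r)\cdot(\text{worker-to-server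 cost})+r\cdot(\text{server-to-worker cost})$, where $r\in[0,1]$ weights the relative cost of the two directions (workers send $\Theta(K_\omega)$ coordinates per iteration; the server broadcasts $\Theta(K_\alpha)$ coordinates per iteration plus $\Theta(d)$ uncompressed coordinates with probability $p$; $d$ coordinates are sent at initialization). Here the ratio $L_{\max}/L$ is assumed unknown, hence the worst case over $L_{\max}\in[L,nL]$. ''Of the order of'' means equal up to universal positive multiplicative constants. *)

From HB Require Import structures.
From mathcomp Require Import all_boot all_order all_algebra.
From mathcomp Require Import all_classical all_reals all_analysis.
Set Implicit Arguments. Unset Strict Implicit. Unset Printing Implicit Defensive.
Import Order.TTheory GRing.Theory Num.Theory.
Local Open Scope classical_set_scope.
Local Open Scope ring_scope.

Section Defs.
Variable R : realType.
Implicit Types (r om al Ko Ka mu L p tau Lmax : R).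

Definition mu_r (d : nat) r Ko Ka : R := r * d%:R / ((1 - r) * Ko + r * Ka).

Definition K_r r Ko Ka : R := (1 - r) * Ko + r * Ka.

Definition Tit (n : nat) L mu om al p tau Lmax : R :=
  Num.max (Num.sqrt (L / (al * p * mu)))
 (Num.max (Num.sqrt (L / (al * tau * mu)))
 (Num.max (Num.sqrt (Num.sqrt (L * Lmax) * (om + 1) * Num.sqrt (om * tau)
                      / (al * Num.sqrt n%:R * mu)))
 (Num.max (Num.sqrt (Num.sqrt (L * Lmax) * Num.sqrt (om + 1) * Num.sqrt (om * tau)
                      / (al * Num.sqrt p * Num.sqrt n%:R * mu)))
 (Num.max (Num.sqrt (Lmax * om * (om + 1) ^+ 2 * p / (n%:R * mu)))
 (Num.max (Num.sqrt (Lmax * om / (n%:R * p * mu)))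
 (Num.max (al^-1)
 (Num.max (tau^-1)
 (Num.max (om + 1) (p^-1))))))))).

Definition Mcomm (n d : nat) r om al Ko Ka L mu p tau Lmax : R :=
  ((1 - r) * Ko + r * (Ka + p * d%:R)) * Tit n L mu om al p tau Lmax + d%:R.

Definition Mworst (n d : nat) r om al Ko Ka L mu p tau : R :=
  sup [set y | exists2 Lmax, L <= Lmax <= n%:R * L &
                 y = Mcomm n d r om al Ko Ka L mu p tau Lmax].

Definition pstar (d : nat) r om Ko Ka : R :=
  if mu_r d r Ko Ka == 0 then (om + 1)^-1
  else Num.min (om + 1)^-1 (mu_r d r Ko Ka)^-1.

Definition taustar (d : nat) r om Ko Ka : R :=
  pstar d r om Ko Ka `^ (3%:R)^-1 / (om + 1) `^ (2%:R / 3%:R).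

Definition Treal (n d : nat) r om al Ko Ka L mu Lmax : R :=
  let m := Num.max (om + 1) (mu_r d r Ko Ka) in
  Num.max (Num.sqrt (L * m / (al * mu)))
 (Num.max (Num.sqrt (Lmax * om * m / (n%:R * mu)))
 (Num.max (al^-1)
 (Num.max (om + 1) (mu_r d r Ko Ka)))).

End Defs.

From HB Require Import structures.
From mathcomp Require Import all_boot all_order all_algebra.
From mathcomp Require Import all_classical all_reals all_analysis.
From mathcomp.algebra_tactics Require Import ring lra.
Import Order.TTheory GRing.Theory Num.Theory.

(* With m = max(omega+1, mu^r), the choice p* = 1/m and
   tau* = p*^(1/3)/(omega+1)^(2/3) satisfies tau* >= p*, (omega+1)^3 tau* <= m^2
   and (omega+1)^2 tau* <= m.  These make every term of T(p*, tau*; Lmax) at most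
   one of the four terms of T^realistic, all of which occur in T(p*, tau*; Lmax):
   so T(p*, tau*; Lmax) = T^realistic.  As K^r mu^r = r d, the extra server cost
   r p* d is at most K^r, which gives (iii).
   M(p, tau; Lmax) is nondecreasing in Lmax, so its worst case is at Lmax = nL.
   There, for any p and tau, the (omega+1)-part of T^realistic is at most
   2 T(p, tau; nL), and its mu^r-part is paid for by AM-GM,
   K^r sqrt(L mu^r/(alpha mu)) <= (K^r + r p d) sqrt(L/(alpha p mu)); hence
   K^r T^realistic + d <= 3 M(p, tau; nL), and (i) holds with constant 6. *)

Set Implicit Arguments. Unset Strict Implicit. Unset Printing Implicit Defensive.
Local Open Scope ring_scope.

Lemma sqrtr_le_sqr (R : rcfType) (a b : R) :
  0 <= b -> (Num.sqrt a <= b) = (a <= b ^+ 2).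
Proof.
move=> b0; have [a0|a0] := leP 0 a.
  by rewrite -ler_sqr ?nnegrE ?sqrtr_ge0 // sqr_sqrtr.
by rewrite ltr0_sqrtr // b0 (le_trans (ltW a0)) ?sqr_ge0.
Qed.

Lemma mulr_sqrtr (R : rcfType) (a b : R) :
  0 <= a -> a * Num.sqrt b = Num.sqrt (a ^+ 2 * b).
Proof. by move=> a0; rewrite sqrtrM ?sqr_ge0 // sqrtr_sqr ger0_norm. Qed.

Lemma sup_eq_max (R : realType) (E : set R) (x : R) :
  E x -> ubound E x -> sup E = x.
Proof.
move=> Ex ubx; apply/le_anti; rewrite ge_sup //=; last by exists x.
by rewrite ub_le_sup //; exists x.
Qed.

Section IterationBound.
Variables (R : realType) (om al : R).

(* T(p, tau; Lmax) with X = L/(alpha mu), Z = sqrt(L Lmax)/(alpha sqrt(n) mu)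
   and Y = Lmax omega/(n mu), see TitE. *)
Definition iter_bound (X Z Y p tau : R) : R :=
  Num.max (Num.sqrt (X / p))
 (Num.max (Num.sqrt (X / tau))
 (Num.max (Num.sqrt (Z * (om + 1) * Num.sqrt (om * tau)))
 (Num.max (Num.sqrt (Z * Num.sqrt (om + 1) * Num.sqrt (om * tau) / Num.sqrt p))
 (Num.max (Num.sqrt (Y * (om + 1) ^+ 2 * p))
 (Num.max (Num.sqrt (Y / p))
 (Num.max al^-1
 (Num.max tau^-1
 (Num.max (om + 1) p^-1)))))))).

Definition realistic_bound (X Y m : R) : R :=
  Num.max (Num.sqrt (X * m)) (Num.max (Num.sqrt (Y * m)) (Num.max al^-1 m)).

Lemma realistic_bound_ge (X Y m : R) : m <= realistic_bound X Y m.
Proof. by rewrite /realistic_bound !le_max lexx !orbT. Qed.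

Lemma le_realistic_bound (X Y m m' : R) : 0 <= X -> 0 <= Y -> m <= m' ->
  realistic_bound X Y m <= realistic_bound X Y m'.
Proof.
move=> X0 Y0 mm'; rewrite /realistic_bound.
by rewrite !le_max2 ?lexx // ler_wsqrtr // ler_wpM2l.
Qed.

Lemma realistic_bound_max (X Y a b : R) : 0 <= X -> 0 <= Y ->
  realistic_bound X Y (Num.max a b) =
  Num.max (realistic_bound X Y a) (realistic_bound X Y b).
Proof.
move=> X0 Y0; case: leP => ab.
  by rewrite max_r // le_realistic_bound.
by rewrite max_l // le_realistic_bound // ltW.
Qed.

Lemma le_iter_bound (X Z Z' Y Y' p tau : R) :
  0 <= om -> 0 <= p -> Z <= Z' -> Y <= Y' ->
  iter_bound X Z Y p tau <= iter_bound X Z' Y' p tau.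
Proof.
move=> om0 p0 ZZ' YY'; have o0 : 0 <= om + 1 by lra.
rewrite /iter_bound !le_max2 ?lexx // ler_wsqrtr //.
all: by rewrite -?mulrA ler_wpM2r // ?mulr_ge0 ?invr_ge0 ?sqrtr_ge0 ?exprn_ge0.
Qed.

Lemma realistic_bound_le_iter_bound (X Z Y m tau : R) :
  realistic_bound X Y m <= iter_bound X Z Y m^-1 tau.
Proof.
by rewrite /realistic_bound /iter_bound invrK !ge_max !le_max !lexx !orbT.
Qed.

Lemma iter_bound_le_realistic_bound (X Z Y m tau : R) :
  0 <= om -> 0 <= X -> 0 <= Z <= X -> 0 <= Y -> 0 < tau ->
  om + 1 <= m -> m^-1 <= tau ->
  (om + 1) ^+ 3 * tau <= m ^+ 2 -> (om + 1) ^+ 2 * tau <= m ->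
  iter_bound X Z Y m^-1 tau <= realistic_bound X Y m.
Proof.
move=> om0 X0 /andP[Z0 ZX] Y0 tau0 om_m m_tau hm2 hm.
have m0 : 0 < m by lra.
have tau_m : tau^-1 <= m by rewrite -[m]invrK lef_pV2 ?posrE ?invr_gt0.
set T := realistic_bound X Y m.
have mT : m <= T by exact: realistic_bound_ge.
have below_XmT a : a <= X * m -> Num.sqrt a <= T.
  move=> aXm; apply: le_trans (ler_wsqrtr aXm) _.
  by rewrite /T /realistic_bound !le_max lexx.
have below_YmT a : a <= Y * m -> Num.sqrt a <= T.
  move=> aYm; apply: le_trans (ler_wsqrtr aYm) _.
  by rewrite /T /realistic_bound !le_max lexx !orbT.
have alT : al^-1 <= T by rewrite /T /realistic_bound !le_max lexx !orbT.
have ZoT : Num.sqrt (Z * (om + 1) * Num.sqrt (om * tau)) <= T.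
  apply: (below_XmT); rewrite -mulrA ler_pM // ?mulr_ge0 ?sqrtr_ge0 //; first lra.
  rewrite mulr_sqrtr ?sqrtr_le_sqr; [nra| lra | lra].
have ZpT : Num.sqrt (Z * Num.sqrt (om + 1) * Num.sqrt (om * tau) / Num.sqrt m^-1) <= T.
  apply: (below_XmT); rewrite -!mulrA ler_pM // ?mulr_ge0 ?sqrtr_ge0 ?invr_ge0 //.
  rewrite sqrtrV ?invrK ?(ltW m0) // -!sqrtrM ?mulr_ge0 ?(ltW tau0) //; try lra.
  rewrite sqrtr_le_sqr ?(ltW m0) // expr2 mulrA ler_wpM2r ?(ltW m0) //.
  apply: le_trans hm; rewrite expr2 -mulrA ler_wpM2l ?ler_wpM2r ?(ltW tau0) //; lra.
have YoT : Num.sqrt (Y * (om + 1) ^+ 2 * m^-1) <= T.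
  apply: (below_YmT); rewrite -mulrA ler_wpM2l // ler_pdivrMr //; nra.
rewrite /iter_bound invrK !ge_max ZoT ZpT YoT alT mT (le_trans tau_m mT).
rewrite (le_trans om_m mT) (below_XmT (X * m)) // (below_YmT (Y * m)) //.
by rewrite below_XmT // ler_wpM2l.
Qed.

Lemma realistic_bound_om1_le (X W p tau : R) :
  0 <= om -> 0 <= X -> 0 <= W -> 0 < p <= 1 -> 0 < tau ->
  realistic_bound X W (om + 1) <= 2 * iter_bound X X W p tau.
Proof.
move=> om0 X0 W0 /andP[p0 p1] tau0.
set T := iter_bound X X W p tau.
have omT : om + 1 <= T by rewrite /T /iter_bound !le_max lexx !orbT.
have T0 : 0 <= T by lra.
have XpT : X / p <= T ^+ 2.
  by rewrite -sqrtr_le_sqr // /T /iter_bound !le_max lexx ?orbT.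
have XtT : X / tau <= T ^+ 2.
  by rewrite -sqrtr_le_sqr // /T /iter_bound !le_max lexx ?orbT.
have XoT : X * (om + 1) * Num.sqrt (om * tau) <= T ^+ 2.
  by rewrite -sqrtr_le_sqr // /T /iter_bound !le_max lexx ?orbT.
have alT : al^-1 <= T by rewrite /T /iter_bound !le_max lexx !orbT.
have WoT : Num.sqrt (W * (om + 1)) <= T.
  have [pom|pom] := leP 1 (p * (om + 1)).
    apply: le_trans (_ : Num.sqrt (W * (om + 1) ^+ 2 * p) <= T).
      apply: ler_wsqrtr; have Wo0 : 0 <= W * (om + 1) by rewrite mulr_ge0 //; lra.
      by have := ler_wpM2l Wo0 pom; rewrite mulr1 expr2 => h; lra.
    by rewrite /T /iter_bound !le_max lexx !orbT.
  apply: le_trans (_ : Num.sqrt (W / p) <= T).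
    by apply: ler_wsqrtr; rewrite ler_pdivlMr //; nra.
  by rewrite /T /iter_bound !le_max lexx !orbT.
have XoT2 : X * (om + 1) <= 2 * T ^+ 2.
  have [tom|tom] := leP (tau * (om + 1)) 1.
    suff : X * (om + 1) <= X / tau by have := sqr_ge0 T; lra.
    by rewrite ler_pdivlMr //; nra.
  have om_le : om <= (om + 1) * Num.sqrt (om * tau).
    rewrite mulr_sqrtr; last lra.
    rewrite -{1}(ger0_norm om0) -sqrtr_sqr; apply: ler_wsqrtr; nra.
  have Xp : X <= X / p by rewrite ler_pdivlMr //; nra.
  have := ler_wpM2l X0 om_le; lra.
rewrite /realistic_bound !ge_max sqrtr_le_sqr; last lra.
apply/and4P; split; try lra; nra.
Qed.

Lemma realistic_bound_mur_le (K D r mr X Z W p tau : R) :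
  0 < K -> 0 <= D -> 0 <= r <= 1 -> K * mr = r * D ->
  0 <= om -> 0 <= X -> 0 <= W -> 0 < p ->
  K * realistic_bound X W mr <= (K + r * p * D) * iter_bound X Z W p tau + D.
Proof.
move=> K0 D0 /andP[r0 r1] Kmr om0 X0 W0 p0.
set P := K + r * p * D; set T := iter_bound X Z W p tau.
have rpD0 : 0 <= r * p * D by rewrite !mulr_ge0 // ltW.
have KP : K <= P by rewrite /P lerDl.
have P0 : 0 <= P by lra.
have amgm Q : 0 <= Q -> K * Num.sqrt (Q * mr) <= P * Num.sqrt (Q / p).
  move=> Q0; rewrite !mulr_sqrtr; try lra.
  apply: ler_wsqrtr.
  have -> : K ^+ 2 * (Q * mr) = K * (r * p * D) * (Q / p).
    by rewrite expr2 -mulrA (mulrCA K Q mr) Kmr; field; rewrite gt_eqF.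
  by rewrite ler_wpM2r ?divr_ge0 ?(ltW p0) // /P; nra.
have XpT : Num.sqrt (X / p) <= T by rewrite /T /iter_bound !le_max lexx.
have WpT : Num.sqrt (W / p) <= T by rewrite /T /iter_bound !le_max lexx !orbT.
have alT : al^-1 <= T by rewrite /T /iter_bound !le_max lexx !orbT.
have omT : om + 1 <= T by rewrite /T /iter_bound !le_max lexx !orbT.
clearbody T.
rewrite /realistic_bound !maxr_pMr ?(ltW K0) // !ge_max Kmr.
apply/and4P; split.
- by have := ler_wpM2l P0 XpT; have := amgm X X0; nra.
- by have := ler_wpM2l P0 WpT; have := amgm W W0; nra.
- by have := ler_wpM2l (ltW K0) alT; nra.
- nra.
Qed.

Lemma realistic_bound_le_cost (K D r mr X W p tau : R) :
  0 < K -> 0 <= D -> 0 <= r <= 1 -> K * mr = r * D ->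
  0 <= om -> 0 <= X -> 0 <= W -> 0 < p <= 1 -> 0 < tau ->
  K * realistic_bound X W (Num.max (om + 1) mr) + D <=
  3 * ((K + r * p * D) * iter_bound X X W p tau + D).
Proof.
move=> K0 D0 r01 Kmr om0 X0 W0 p01 tau0; have /andP[p0 _] := p01.
have mrB := realistic_bound_mur_le X tau K0 D0 r01 Kmr om0 X0 W0 p0.
have om1B := realistic_bound_om1_le om0 X0 W0 p01 tau0.
set T := iter_bound X X W p tau in mrB om1B *.
have rpD0 : 0 <= r * p * D by case/andP: r01 => r0 _; rewrite !mulr_ge0 // ltW.
have T0 : 0 <= T by have := realistic_bound_ge X W (om + 1); lra.
have om1B' : K * realistic_bound X W (om + 1) <= 2 * ((K + r * p * D) * T).
  by have := ler_wpM2l (ltW K0) om1B; nra.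
rewrite realistic_bound_max // maxr_pMr ?(ltW K0) //.
suff : Num.max (K * realistic_bound X W (om + 1)) (K * realistic_bound X W mr)
       <= 2 * ((K + r * p * D) * T) + D by nra.
by rewrite ge_max; apply/andP; split; nra.
Qed.

End IterationBound.

Lemma powR_divn (R : realType) (x : R) (k l : nat) :
  0 <= x -> x `^ (k%:R / l%:R) = (x `^ l%:R^-1) ^+ k.
Proof. by move=> x0; rewrite -powR_mulrn ?powR_ge0 // -powRrM mulrC. Qed.

Lemma powR_invnK (R : realType) (x : R) (k : nat) :
  0 <= x -> (0 < k)%N -> (x `^ k%:R^-1) ^+ k = x.
Proof.
move=> x0 k0; rewrite -powR_mulrn ?powR_ge0 // -powRrM mulVf ?powRr1 //.
by rewrite pnatr_eq0 -lt0n.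
Qed.

Lemma taustar_bounds (R : realType) (om m : R) : 0 <= om -> om + 1 <= m ->
  let tau := m^-1 `^ (3%:R)^-1 / (om + 1) `^ (2%:R / 3%:R) in
  [/\ 0 < tau <= 1, m^-1 <= tau,
      (om + 1) ^+ 3 * tau <= m ^+ 2 & (om + 1) ^+ 2 * tau <= m].
Proof.
move=> om0 om_m tau.
have m0 : 0 < m by lra.
set q := m^-1; have q0 : 0 < q by rewrite invr_gt0.
have mq : m * q = 1 by rewrite mulfV ?gt_eqF.
set a := q `^ (3%:R)^-1; set c := (om + 1) `^ (3%:R)^-1.
have c0 : 0 < c by rewrite powR_gt0 //; lra.
have c3 : c ^+ 3 = om + 1 by rewrite powR_invnK //; lra.
set t := a * c.
have t0 : 0 < t by rewrite mulr_gt0 // powR_gt0.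
have t3 : t ^+ 3 = q * (om + 1) by rewrite exprMn c3 powR_invnK // ltW.
have tauE : tau * (om + 1) = t.
  rewrite /tau -/q -/a powR_divn -?/c -c3 /t; last by rewrite exprn_ge0 ?ltW.
  by field; rewrite gt_eqF.
have t1 : t <= 1.
  rewrite -(ler_pXn2r (_ : 0 < 3)%N) ?nnegrE ?expr1n ?(ltW t0) // t3.
  by rewrite mulrC ler_pdivrMr // mul1r.
have o0 : 0 < om + 1 by lra.
have tau0 : 0 < tau by rewrite -(pmulr_lgt0 tau o0) tauE.
have tt k : t ^+ k <= 1 by rewrite exprn_ile1 // ltW.
split.
- by rewrite tau0 (le_trans _ t1) // -tauE ler_peMr //; lra.
- have : q * (om + 1) <= tau * (om + 1) by rewrite -t3 tauE exprSr ler_piMl ?tt // ltW.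
  by rewrite ler_pM2r.
- have -> : (om + 1) ^+ 3 * tau = t * (t ^+ 3) ^+ 2 * m ^+ 2.
    transitivity ((om + 1) ^+ 3 * tau * (m * q) ^+ 2).
      by rewrite mq expr1n mulr1.
    by rewrite t3 -tauE; ring.
  by rewrite ler_piMl ?sqr_ge0 // -exprM -exprS.
- have -> : (om + 1) ^+ 2 * tau = t * t ^+ 3 * m.
    transitivity ((om + 1) ^+ 2 * tau * (m * q)); first by rewrite mq mulr1.
    by rewrite t3 -tauE; ring.
  by rewrite ler_piMl ?(ltW m0) // -exprS.
Qed.

Section TwoDirection.
Variables (R : realType) (n d : nat) (r om al Ko Ka mu L : R).
Hypotheses (n_gt0 : (0 < n)%N) (r01 : 0 <= r <= 1) (om_ge0 : 0 <= om)
  (al_gt0 : 0 < al) (Ko_gt0 : 0 < Ko) (Ka_gt0 : 0 < Ka)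
  (mu_gt0 : 0 < mu) (mu_le_L : mu <= L).

Local Notation K := (K_r r Ko Ka).
Local Notation mr := (mu_r d r Ko Ka).
Local Notation m := (Num.max (om + 1) mr).
Local Notation ps := (pstar d r om Ko Ka).
Local Notation ts := (taustar d r om Ko Ka).
Local Notation X := (L / (al * mu)).
Local Notation Z Lmax := (Num.sqrt (L * Lmax) / (al * Num.sqrt n%:R * mu)).
Local Notation Y Lmax := (Lmax * om / (n%:R * mu)).
Local Notation nL := (n%:R * L).
Local Notation T p tau Lmax := (Tit n L mu om al p tau Lmax).
Local Notation Tr Lmax := (Treal n d r om al Ko Ka L mu Lmax).
Local Notation M p tau Lmax := (Mcomm n d r om al Ko Ka L mu p tau Lmax).
Local Notation Mw p tau := (Mworst n d r om al Ko Ka L mu p tau).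

Lemma Kr_gt0 : 0 < K.
Proof.
have [r0 r1] := andP r01; rewrite /K_r.
have [->|r_neq0] := eqVneq r 0; first by rewrite subr0 mul1r mul0r addr0.
have r_gt0 : 0 < r by rewrite lt_def r_neq0.
have := Ko_gt0; have := Ka_gt0; nra.
Qed.

Lemma Kr_mur : K * mr = r * d%:R.
Proof. by have := Kr_gt0; rewrite /mu_r /K_r => K_gt0; field; rewrite gt_eqF. Qed.

Lemma mur_ge0 : 0 <= mr.
Proof.
have [r0 _] := andP r01.
by rewrite /mu_r divr_ge0 ?mulr_ge0 // ltW ?Kr_gt0.
Qed.

Lemma pstarE : ps = m^-1.
Proof.
have o_gt0 : 0 < om + 1 by rewrite ltr_wpDl.
rewrite /pstar; have [->|mr_neq0] := eqVneq mr 0; first by rewrite max_l ?ltW.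
have mr_gt0 : 0 < mr by rewrite lt_def mr_neq0 mur_ge0.
by case: leP => h; [rewrite min_r | rewrite min_l] => //; rewrite lef_pV2 ?posrE // ltW.
Qed.

Lemma McommE p tau Lmax :
  M p tau Lmax = (K + r * p * d%:R) * T p tau Lmax + d%:R.
Proof. by rewrite /Mcomm /K_r; congr (_ * _ + _); ring. Qed.

Lemma TitE p tau Lmax : 0 < p -> 0 < tau ->
  T p tau Lmax = iter_bound om al X (Z Lmax) (Y Lmax) p tau.
Proof.
move=> p_gt0 tau_gt0; have tau0 := gt_eqF tau_gt0.
have sn : Num.sqrt n%:R != 0 :> R by rewrite gt_eqF // sqrtr_gt0 ltr0n.
have sp : Num.sqrt p != 0 by rewrite gt_eqF // sqrtr_gt0.
have al0 := gt_eqF al_gt0; have mu0 := gt_eqF mu_gt0; have p0 := gt_eqF p_gt0.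
have n0 : n%:R != 0 :> R by rewrite pnatr_eq0 -lt0n.
rewrite /Tit /iter_bound.
by congr (Num.max (Num.sqrt _) (Num.max (Num.sqrt _) (Num.max (Num.sqrt _)
  (Num.max (Num.sqrt _) (Num.max (Num.sqrt _) (Num.max (Num.sqrt _) _))))));
  field; rewrite ?al0 ?mu0 ?p0 ?tau0 ?sn ?sp ?n0.
Qed.

Lemma TrealE Lmax : Tr Lmax = realistic_bound al X (Y Lmax) m.
Proof.
have al0 := gt_eqF al_gt0; have mu0 := gt_eqF mu_gt0.
have n0 : n%:R != 0 :> R by rewrite pnatr_eq0 -lt0n.
rewrite /Treal /realistic_bound /=.
by congr (Num.max (Num.sqrt _) (Num.max (Num.sqrt _) _)); field; rewrite ?al0 ?mu0 ?n0.
Qed.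

Lemma om1_le_m : om + 1 <= m.
Proof. by rewrite le_max lexx. Qed.

Lemma m_gt0 : 0 < m.
Proof. by apply: lt_le_trans om1_le_m; rewrite ltr_wpDl. Qed.

Lemma taustarE : ts = m^-1 `^ (3%:R)^-1 / (om + 1) `^ (2%:R / 3%:R).
Proof. by rewrite /taustar pstarE. Qed.

Lemma pstar_taustar_bounds : (0 < ps <= 1) /\ (0 < ts <= 1).
Proof.
have [ts01 _ _ _] := taustar_bounds om_ge0 om1_le_m.
have m_ge1 : 1 <= m by apply: le_trans _ om1_le_m; rewrite lerDr.
by rewrite pstarE taustarE ts01 invr_gt0 m_gt0 invf_le1 ?m_gt0.
Qed.

Lemma L_gt0 : 0 < L.
Proof. exact: lt_le_trans mu_gt0 mu_le_L. Qed.

Lemma X_ge0 : 0 <= X.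
Proof. by rewrite divr_ge0 ?mulr_ge0 // ltW // L_gt0. Qed.

Lemma L_le_nL : L <= nL.
Proof. by rewrite ler_peMl ?ler1n // ltW // L_gt0. Qed.

Lemma Z_nL : Z nL = X.
Proof.
have L0 : 0 <= L := ltW L_gt0.
have -> : L * nL = n%:R * L ^+ 2 by ring.
rewrite sqrtrM ?ler0n // sqrtr_sqr ger0_norm //.
by field; rewrite !gt_eqF ?sqrtr_gt0 ?ltr0n.
Qed.

Lemma Z_bounds Lmax : L <= Lmax <= nL -> 0 <= Z Lmax <= X.
Proof.
case/andP=> LLmax Lmax_nL; have L0 : 0 <= L := ltW L_gt0.
have c0 : 0 <= (al * Num.sqrt n%:R * mu)^-1.
  by rewrite invr_ge0 !mulr_ge0 ?sqrtr_ge0 ?ltW.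
rewrite mulr_ge0 ?sqrtr_ge0 //= -Z_nL.
by apply: ler_wpM2r => //; apply/ler_wsqrtr/ler_wpM2l.
Qed.

Lemma Y_bounds Lmax : L <= Lmax <= nL -> 0 <= Y Lmax <= Y nL.
Proof.
case/andP=> LLmax Lmax_nL; have L0 : 0 <= L := ltW L_gt0.
have c0 : 0 <= (n%:R * mu)^-1 by rewrite invr_ge0 mulr_ge0 ?ler0n ?ltW.
have Lmax0 : 0 <= Lmax := le_trans L0 LLmax.
by rewrite !mulr_ge0 //=; apply: ler_wpM2r => //; apply: ler_wpM2r.
Qed.

Lemma Tit_pstar_taustar Lmax : L <= Lmax <= nL -> T ps ts Lmax = Tr Lmax.
Proof.
move=> hL; have [ts_bounds ps_le_ts ts_m2 ts_m] := taustar_bounds om_ge0 om1_le_m.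
have [ts_gt0 _] := andP ts_bounds.
have [Y0 _] := andP (Y_bounds hL).
rewrite taustarE pstarE TitE ?invr_gt0 ?m_gt0 // TrealE.
apply/le_anti; rewrite realistic_bound_le_iter_bound andbT.
exact: (iter_bound_le_realistic_bound _ om_ge0 X_ge0 (Z_bounds hL) Y0 ts_gt0
  om1_le_m ps_le_ts ts_m2 ts_m).
Qed.

Lemma Treal_ge0 Lmax : 0 <= Tr Lmax.
Proof.
rewrite TrealE; apply: le_trans (realistic_bound_ge _ _ _ _).
exact: ltW m_gt0.
Qed.

Lemma r_pstar_d_le_Kr : r * ps * d%:R <= K.
Proof.
have -> : r * ps * d%:R = K * (mr / m) by rewrite pstarE mulrA Kr_mur mulrAC.
by rewrite ler_piMr ?(ltW Kr_gt0) // ler_pdivrMr ?m_gt0 // mul1r le_max lexx orbT.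
Qed.

Lemma Mcomm_pstar_taustar Lmax : L <= Lmax <= nL ->
  K * Tr Lmax + d%:R <= M ps ts Lmax <= 2 * (K * Tr Lmax + d%:R).
Proof.
move=> hL; rewrite McommE Tit_pstar_taustar //.
have [r0 _] := andP r01; have [/andP[ps0 _] _] := pstar_taustar_bounds.
have rpd0 : 0 <= r * ps * d%:R by rewrite !mulr_ge0 ?ler0n // ltW.
have rpdK := r_pstar_d_le_Kr; have T0 := Treal_ge0 Lmax; have d0 := ler0n R d.
by apply/andP; split; nra.
Qed.

Lemma Mcomm_le_nL p tau Lmax : 0 < p -> 0 < tau -> L <= Lmax <= nL ->
  M p tau Lmax <= M p tau nL.
Proof.
move=> p_gt0 tau_gt0 hL; have [r0 _] := andP r01.
have c0 : 0 <= K + r * p * d%:R.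
  by rewrite addr_ge0 ?mulr_ge0 ?ler0n // ltW ?Kr_gt0.
have [_ ZX] := andP (Z_bounds hL); have [_ YnL] := andP (Y_bounds hL).
by rewrite !McommE lerD2r ler_wpM2l // !TitE // le_iter_bound ?Z_nL // ltW.
Qed.

Lemma Mworst_eq p tau : 0 < p -> 0 < tau -> Mw p tau = M p tau nL.
Proof.
move=> p_gt0 tau_gt0; apply: sup_eq_max; first by exists nL; rewrite ?L_le_nL ?lexx.
by move=> _ [Lmax hL ->]; exact: Mcomm_le_nL.
Qed.

Lemma Treal_le_Mcomm p tau : 0 < p <= 1 -> 0 < tau ->
  K * Tr nL + d%:R <= 3 * M p tau nL.
Proof.
move=> p01 tau_gt0; have [p_gt0 _] := andP p01.
have hnL : L <= nL <= nL by rewrite L_le_nL lexx.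
have [Y0 _] := andP (Y_bounds hnL).
rewrite McommE TitE // TrealE Z_nL.
exact: (realistic_bound_le_cost _ Kr_gt0 (ler0n R d) r01 Kr_mur om_ge0 X_ge0 Y0
  p01 tau_gt0).
Qed.

Lemma pstar_taustar_sharp :
  [/\ (0 < ps <= 1) /\ (0 < ts <= 1),
      forall p tau, 0 < p <= 1 -> 0 < tau <= 1 -> Mw ps ts <= 6 * Mw p tau,
      forall Lmax, 0 <= Tr Lmax,
      forall Lmax, L <= Lmax <= nL -> T ps ts Lmax = Tr Lmax
    & forall Lmax, L <= Lmax <= nL ->
        K * Tr Lmax + d%:R <= M ps ts Lmax <= 2 * (K * Tr Lmax + d%:R)].
Proof.
split; [exact: pstar_taustar_bounds | | exact: Treal_ge0 | exact: Tit_pstar_taustar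
       | exact: Mcomm_pstar_taustar].
move=> p tau p01 /andP[tau_gt0 _]; have [p_gt0 _] := andP p01.
have [/andP[ps_gt0 _] /andP[ts_gt0 _]] := pstar_taustar_bounds.
have hnL : L <= nL <= nL by rewrite L_le_nL lexx.
have /andP[_ Mopt] := Mcomm_pstar_taustar hnL.
have := Treal_le_Mcomm p01 tau_gt0.
by rewrite !Mworst_eq //; lra.
Qed.

End TwoDirection.

Theorem theorem2 (R : realType) :
  exists C : R, 0 < C /\
  forall (n d : nat) (r om al Ko Ka mu L : R),
    (1 <= n)%N -> (1 <= d)%N ->
    0 <= r <= 1 -> 0 <= om -> 0 < al <= 1 -> 0 < Ko -> 0 < Ka ->
    0 < mu -> mu <= L ->
    let ps := pstar d r om Ko Ka in
    let ts := taustar d r om Ko Ka in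
    [/\ (* (i) (p_star, tau_star) minimizes the worst-case M, up to a constant *)
        (0 < ps <= 1 /\ 0 < ts <= 1) /\
        (forall p tau : R, 0 < p <= 1 -> 0 < tau <= 1 ->
           Mworst n d r om al Ko Ka L mu ps ts
             <= C * Mworst n d r om al Ko Ka L mu p tau),
        (* (ii) T(p_star, tau_star; Lmax) is of the order of T^realistic *)
        (forall Lmax : R, L <= Lmax <= n%:R * L ->
           Tit n L mu om al ps ts Lmax <= C * Treal n d r om al Ko Ka L mu Lmax /\
           Treal n d r om al Ko Ka L mu Lmax <= C * Tit n L mu om al ps ts Lmax)
      & (* (iii) M(p_star, tau_star; Lmax) is of the order of K^r T^realistic + d *)
        (forall Lmax : R, L <= Lmax <= n%:R * L ->
           Mcomm n d r om al Ko Ka L mu ps ts Lmax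
             <= C * (K_r r Ko Ka * Treal n d r om al Ko Ka L mu Lmax + d%:R) /\
           K_r r Ko Ka * Treal n d r om al Ko Ka L mu Lmax + d%:R
             <= C * Mcomm n d r om al Ko Ka L mu ps ts Lmax)].
Proof.
exists 6; split; first by rewrite ltr0n.
move=> n d r om al Ko Ka mu L n_gt0 _ r01 om0 /andP[al0 _] Ko0 Ka0 mu0 muL ps ts.
have [bounds worst T_ge0 Topt Mopt] :=
  pstar_taustar_sharp d n_gt0 r01 om0 al0 Ko0 Ka0 mu0 muL.
have K_gt0 := Kr_gt0 r01 Ko0 Ka0; have d_ge0 := ler0n R d.
split; first by split.
- by move=> Lmax hL; rewrite Topt //; have := T_ge0 Lmax; split; lra.
- move=> Lmax hL; have /andP[lo hi] := Mopt _ hL.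
  by have := T_ge0 Lmax; split; nra.
Qed.
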